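(* For all KAT-morphisms $(\mathfrak{s},\mathfrak{t}): (\Sigma_0,T_0) \to (\Sigma_1,T_1)$ and all $e \in \mathsf{KAT}(\Sigma_0,T_0)$, we have $L(\mathrm{apply}^\mathfrak{s}_\mathfrak{t}(e)) = \mathrm{apply}^{\mathfrak{s}'}_\mathfrak{t}(L(e))$, where $\mathfrak{s}'$ is given by $\mathfrak{s}'(p) = L(\mathfrak{s}(p))$.
   Context: $\mathsf{KAT}(\Sigma,T)$ is the set of KAT expressions over action alphabet $\Sigma$ and test alphabet $T$, $\mathsf{BA}(T)$ the set of Boolean test expressions over $T$, $\mathsf{At}_T = 2^T$ the set of atoms, and $L(e)$ the guarded-string language semantics of a KAT expression $e$; $\mathcal{G}(\Sigma,T)$ denotes the set of regular guarded languages (sets of strings in $\mathsf{At}_T(\Sigma\mathsf{At}_T)^*$). Guarded composition $w\diamond x$ of $w=w'\alpha$ and $x=\alpha x'$ is $w'\alpha x'$ (defined only when the last atom of $w$ equals the first atom of $x$). A KAT-morphism $(\mathfrak{s},\mathfrak{t}):(\Sigma_0,T_0)\to(\Sigma_1,T_1)$ is a pair of functions $\mathfrak{s}:\Sigma_0\to\mathsf{KAT}(\Sigma_1,T_1)$ and $\mathfrak{t}:T_0\to\mathsf{BA}(T_1)$; on expressions, $\mathrm{apply}^\mathfrak{s}_\mathfrak{t}(e)$ is obtained from $e$ by replacing each test $t\in T_0$ by $\mathfrak{t}(t)$ and each action $p\in\Sigma_0$ by $\mathfrak{s}(p)$. For a guarded language morphism $(\mathfrak{s},\mathfrak{t})$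 with $\mathfrak{s}:\Sigma_0\to\mathcal{G}(\Sigma_1,T_1)$ and $\mathfrak{t}:T_0\to\mathsf{BA}(T_1)$: an atom $\beta\in\mathsf{At}_{T_1}$ is $\mathfrak{t}$-consistent with $\alpha\in\mathsf{At}_{T_0}$ if for all $t\in T_0$, $\alpha\le t$ iff $\beta\le\mathfrak{t}(t)$; for $L\in\mathcal{G}(\Sigma_0,T_0)$, $\mathrm{apply}_\mathfrak{t}(L)$ consists of all $\beta_0p_0\beta_1\cdots p_{n-1}\beta_n$ such that $\alpha_0p_0\alpha_1\cdots p_{n-1}\alpha_n\in L$ and each $\beta_i$ is $\mathfrak{t}$-consistent with $\alpha_i$; for $L\in\mathcal{G}(\Sigma_0,T_1)$, $\mathrm{apply}^\mathfrak{s}(L)$ consists of all $\alpha_0\diamond w_0\diamond\alpha_1\diamond\cdots\diamond\alpha_{n-1}\diamond w_{n-1}\diamond\alpha_n$ with $\alpha_0p_0\alpha_1\cdots p_{n-1}\alpha_n\in L$ and $w_i\in\mathfrak{s}(p_i)$; and $\mathrm{apply}^\mathfrak{s}_\mathfrak{t} = \mathrm{apply}^\mathfrak{s}\circ\mathrm{apply}_\mathfrak{t}$. *)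

From Stdlib Require Import List.
From mathcomp Require Import all_boot.
Set Implicit Arguments. Unset Strict Implicit. Unset Printing Implicit Defensive.

Inductive bexp (T : Type) : Type :=
| BZero | BOne | BVar of T | BNot of bexp T
| BAnd of bexp T & bexp T | BOr of bexp T & bexp T.
Arguments BZero {T}. Arguments BOne {T}.

Inductive kexp (S T : Type) : Type :=
| KTest of bexp T | KAct of S
| KPlus of kexp S T & kexp S T | KSeq of kexp S T & kexp S T
| KStar of kexp S T.

(** Atoms At_T = 2^T, represented as finite sets of (true) tests. *)
Definition atom (T : finType) := {set T}.

Fixpoint beval (T : finType) (a : atom T) (b : bexp T) : bool :=
  match b with
  | BZero => false | BOne => true | BVar t => t \in a
  | BNot b => ~~ beval a b
  | BAnd b c => beval a b && beval a c
  | BOr b c => beval a b || beval a c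
  end.

(** Guarded strings  alpha_0 p_0 alpha_1 ... p_{n-1} alpha_n . *)
Record gstring (S : Type) (T : finType) := GS { gs_first : atom T; gs_rest : seq (S * atom T) }.

Definition gs_last S (T : finType) (w : gstring S T) : atom T := last (gs_first w) (map snd (gs_rest w)).
Definition gs_atoms S (T : finType) (w : gstring S T) : seq (atom T) := gs_first w :: map snd (gs_rest w).
Definition gs_acts S (T : finType) (w : gstring S T) : seq S := map fst (gs_rest w).

Definition gcomp S (T : finType) (w x : gstring S T) : option (gstring S T) :=
  if gs_last w == gs_first x then Some (GS (gs_first w) (gs_rest w ++ gs_rest x)) else None.

Definition glang S (T : finType) := gstring S T -> Prop.
Definition lang_eq S (T : finType) (L1 L2 : glang S T) := forall w, L1 w <-> L2 w.

Definition lconcat S (T : finType) (L1 L2 : glang S T) : glang S T :=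
  fun z => exists w x, L1 w /\ L2 x /\ gcomp w x = Some z.
Definition lone S (T : finType) : glang S T := fun z => gs_rest z = [::].
Fixpoint lpow S (T : finType) (L : glang S T) (n : nat) : glang S T :=
  match n with 0 => @lone S T | n.+1 => lconcat L (lpow L n) end.

Fixpoint Lsem S (T : finType) (e : kexp S T) : glang S T :=
  match e with
  | KTest b => fun z => gs_rest z = [::] /\ beval (gs_first z) b
  | KAct p => fun z => exists a b, z = GS a [:: (p, b)]
  | KPlus e f => fun z => Lsem e z \/ Lsem f z
  | KSeq e f => lconcat (Lsem e) (Lsem f)
  | KStar e => fun z => exists n, lpow (Lsem e) n z
  end.

Fixpoint bapply (T0 T1 : Type) (t : T0 -> bexp T1) (b : bexp T0) : bexp T1 :=
  match b with
  | BZero => BZero | BOne => BOne | BVar x => t x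
  | BNot b => BNot (bapply t b)
  | BAnd b c => BAnd (bapply t b) (bapply t c)
  | BOr b c => BOr (bapply t b) (bapply t c)
  end.

Fixpoint kapply S0 S1 T0 T1 (s : S0 -> kexp S1 T1) (t : T0 -> bexp T1)
    (e : kexp S0 T0) : kexp S1 T1 :=
  match e with
  | KTest b => KTest _ (bapply t b)
  | KAct p => s p
  | KPlus e f => KPlus (kapply s t e) (kapply s t f)
  | KSeq e f => KSeq (kapply s t e) (kapply s t f)
  | KStar e => KStar (kapply s t e)
  end.

Definition tconsistent (T0 T1 : finType) (t : T0 -> bexp T1) (a : atom T0) (b : atom T1) :=
  forall x : T0, (x \in a) = beval b (t x).

Definition lapply_t S (T0 T1 : finType) (t : T0 -> bexp T1) (L : glang S T0) : glang S T1 :=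
  fun z => exists w, L w /\ gs_acts w = gs_acts z /\
    List.Forall2 (tconsistent t) (gs_atoms w) (gs_atoms z).

(* alpha_0 <> w_0 <> alpha_1 <> ... <> w_{n-1} <> alpha_n, built right to left *)
Fixpoint expand S0 S1 (T : finType) (s : S0 -> glang S1 T) (a : atom T)
    (r : seq (S0 * atom T)) (z : gstring S1 T) : Prop :=
  match r with
  | [::] => z = GS a [::]
  | (p, b) :: r' => exists w y1 y2 z', s p w /\ expand s b r' z' /\
      gcomp (GS a [::]) w = Some y1 /\ gcomp y1 (GS b [::]) = Some y2 /\
      gcomp y2 z' = Some z
  end.

Definition lapply_s S0 S1 (T : finType) (s : S0 -> glang S1 T) (L : glang S0 T) : glang S1 T :=
  fun z => exists u, L u /\ expand s (gs_first u) (gs_rest u) z.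

Definition lapply_st S0 S1 (T0 T1 : finType) (s : S0 -> glang S1 T1) (t : T0 -> bexp T1)
    (L : glang S0 T0) : glang S1 T1 := lapply_s s (lapply_t t L).

From Stdlib Require List.
From mathcomp Require Import all_boot.
Set Implicit Arguments. Unset Strict Implicit. Unset Printing Implicit Defensive.

(* Each KAT operator is preserved by [lapply_st s t], so the theorem follows by
   induction on [e].  Since [t]-consistency determines the [T0]-atom from the
   [T1]-atom (it is [tpull t b]), [lapply_t t L] is the inverse image of [L]
   under the atom map [gs_map (tpull t)]; this map commutes with guarded
   composition, and a factorisation of an image lifts to the preimage by cutting
   the action sequence at the same place.  Substituting languages for actions
   ([expand]) turns a guarded composition into the guarded composition of the
   substituted strings, by associativity of guarded composition. *)

Lemma Forall2_graph (A B : Type) (R : A -> B -> Prop) (f : B -> A) :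
  (forall a b, R a b <-> a = f b) ->
  forall l1 l2, List.Forall2 R l1 l2 <-> l1 = map f l2.
Proof.
move=> Rf; elim=> [|a l1 IH] [|b l2] /=; split=> //; try by move=> H; inversion H.
- move=> H; inversion H as [|? ? ? ? Rab Rl].
  by move/Rf: Rab => ->; move/IH: Rl => ->.
- by case=> /Rf Rab /IH Rl; constructor.
Qed.

Section GuardedStrings.
Variables (S : Type) (T : finType).
Implicit Types (a b : atom T) (r : seq (S * atom T)) (w x y z u v : gstring S T).

Lemma gstring_eq w z : gs_atoms w = gs_atoms z -> gs_acts w = gs_acts z -> w = z.
Proof.
case: w z => a r [b q] [-> Esnd] Efst.
by rewrite -[r]zip_unzip -[q]zip_unzip; congr (GS _ (zip _ _)).
Qed.

Lemma gstring_eta w : GS (gs_first w) (gs_rest w) = w.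
Proof. by case: w. Qed.

Lemma gs_last_cat w r :
  gs_last (GS (gs_first w) (gs_rest w ++ r)) = gs_last (GS (gs_last w) r).
Proof. by rewrite /gs_last /= map_cat last_cat. Qed.

Lemma gcompP w x z : gcomp w x = Some z <->
  gs_last w = gs_first x /\ z = GS (gs_first w) (gs_rest w ++ gs_rest x).
Proof.
by rewrite /gcomp; case: eqP => E; [split=> [[<-] | [_ ->]] | split=> // -[]].
Qed.

Lemma gcomp_first w x z : gcomp w x = Some z -> gs_first z = gs_first w.
Proof. by case/gcompP=> _ ->. Qed.

Lemma gcomp_last w x z : gcomp w x = Some z -> gs_last z = gs_last x.
Proof. by case/gcompP=> E ->; rewrite gs_last_cat E; case: x {E}. Qed.

Lemma gcomp1l a x z : gcomp (GS a [::]) x = Some z <-> gs_first x = a /\ z = x.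
Proof. by rewrite gcompP /gs_last; case: x => b q /=; split=> -[-> ->]. Qed.

Lemma gcomp1r w b z : gcomp w (GS b [::]) = Some z <-> gs_last w = b /\ z = w.
Proof. by rewrite gcompP cats0; case: w => a r /=; split=> -[-> ->]. Qed.

Lemma gcompA w x u z :
  (exists y, gcomp w x = Some y /\ gcomp y u = Some z) <->
  (exists v, gcomp x u = Some v /\ gcomp w v = Some z).
Proof.
split=> [[y [Hy Hyu]] | [v [Hv Hwv]]].
- have Ly := gcomp_last Hy.
  move: Hy Ly Hyu => /gcompP [Ewx ->] Ly /gcompP [Eyu ->].
  exists (GS (gs_first x) (gs_rest x ++ gs_rest u)).
  by split; apply/gcompP; rewrite /= -?Ly -?catA.
- move: Hv Hwv => /gcompP [Exu ->] /gcompP [Ewv ->].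
  exists (GS (gs_first w) (gs_rest w ++ gs_rest x)).
  split; apply/gcompP; rewrite /= ?catA; split=> //.
  by rewrite gs_last_cat Ewv /= -Exu; case: x {Ewv Exu}.
Qed.

End GuardedStrings.

Section AtomMap.
Variables (S : Type) (T T' : finType) (f : atom T -> atom T').
Implicit Types (w x z : gstring S T).

Definition gs_map z : gstring S T' :=
  GS (f (gs_first z)) [seq (pa.1, f pa.2) | pa <- gs_rest z].

Lemma gs_atoms_map z : gs_atoms (gs_map z) = map f (gs_atoms z).
Proof. by rewrite /gs_atoms /= -!map_comp. Qed.

Lemma gs_acts_map z : gs_acts (gs_map z) = gs_acts z.
Proof. by rewrite /gs_acts /= -map_comp. Qed.

Lemma gs_last_map z : gs_last (gs_map z) = f (gs_last z).
Proof. by rewrite /gs_last /= -map_comp (map_comp f snd) last_map. Qed.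

Lemma gcomp_map w x z :
  gcomp w x = Some z -> gcomp (gs_map w) (gs_map x) = Some (gs_map z).
Proof.
by case/gcompP=> E ->; apply/gcompP; rewrite gs_last_map E /gs_map /= map_cat.
Qed.

Lemma gcomp_map_inv (w' x' : gstring S T') z :
  gcomp w' x' = Some (gs_map z) ->
  exists w x, [/\ gs_map w = w', gs_map x = x' & gcomp w x = Some z].
Proof.
case: z => a r /gcompP [E [Ea Er]].
set n := size (gs_rest w').
have Ew' : gs_rest w' = [seq (pa.1, f pa.2) | pa <- take n r].
  by rewrite map_take Er take_size_cat.
have Ex' : gs_rest x' = [seq (pa.1, f pa.2) | pa <- drop n r].
  by rewrite map_drop Er drop_size_cat.
have Ew : gs_map (GS a (take n r)) = w' by rewrite -[w']gstring_eta -Ea Ew'.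
exists (GS a (take n r)), (GS (gs_last (GS a (take n r))) (drop n r)); split=> //.
- rewrite -[x']gstring_eta Ex'; congr GS.
  by rewrite /= -E -Ew gs_last_map.
- by apply/gcompP; rewrite /= cat_take_drop.
Qed.

End AtomMap.

Section Languages.
Variables (S : Type) (T : finType).
Implicit Types (L : glang S T) (P : pred (atom T)).

Definition ltest P : glang S T := fun z => gs_rest z = [::] /\ P (gs_first z).

Definition lstar L : glang S T := fun z => exists n, lpow L n z.

Lemma lconcat_ext L1 L1' L2 L2' :
  lang_eq L1 L1' -> lang_eq L2 L2' -> lang_eq (lconcat L1 L2) (lconcat L1' L2').
Proof.
by move=> E1 E2 z; split=> -[w [x [Lw [Lx Hz]]]]; exists w, x;
  rewrite (E1 w) (E2 x) in Lw Lx *.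
Qed.

Lemma lpow_ext L L' n : lang_eq L L' -> lang_eq (lpow L n) (lpow L' n).
Proof. by move=> E; elim: n => //= n IH; exact: lconcat_ext. Qed.

Lemma lstar_ext L L' : lang_eq L L' -> lang_eq (lstar L) (lstar L').
Proof. by move=> E z; split=> -[n Hn]; exists n; apply/(lpow_ext n E). Qed.

End Languages.

Section TestMorphism.
Variables (S : Type) (T0 T1 : finType) (t : T0 -> bexp T1).
Implicit Types (L : glang S T0) (z : gstring S T1).

Definition tpull (b : atom T1) : atom T0 := [set x | beval b (t x)].

Lemma tconsistentE a b : tconsistent t a b <-> a = tpull b.
Proof.
split=> [Hab | ->]; last by move=> x; rewrite inE.
by apply/setP=> x; rewrite inE Hab.
Qed.

Lemma beval_bapply b e : beval b (bapply t e) = beval (tpull b) e.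
Proof. by elim: e => //= [x | e -> | e -> f -> | e -> f ->]; rewrite ?inE. Qed.

Lemma lapply_tE L z : lapply_t t L z <-> L (gs_map tpull z).
Proof.
split=> [[w [Lw [Eacts Eatoms]]] | Lz].
- suff -> : gs_map tpull z = w by [].
  apply: gstring_eq; last by rewrite gs_acts_map.
  by rewrite gs_atoms_map; apply/esym/(Forall2_graph tconsistentE).
- exists (gs_map tpull z); split=> //; split; first exact: gs_acts_map.
  by apply/(Forall2_graph tconsistentE); rewrite gs_atoms_map.
Qed.

Lemma lapply_t_lone : lang_eq (lapply_t t (@lone S T0)) (@lone S T1).
Proof. by move=> z; rewrite lapply_tE; case: z => a []. Qed.

Lemma lapply_t_ltest (P : pred (atom T0)) :
  lang_eq (lapply_t t (@ltest S T0 P)) (@ltest S T1 (P \o tpull)).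
Proof. by move=> z; rewrite lapply_tE; case: z => a [|? ?]; split=> -[? ?]. Qed.

Lemma lapply_t_act (p : S) :
  lang_eq (lapply_t t (Lsem (@KAct S T0 p))) (Lsem (@KAct S T1 p)).
Proof.
move=> z; rewrite lapply_tE /gs_map; case: z => a [|[q b] [|? ?]] /=;
  by split=> -[? [? [*]]] //; subst; do 2 eexists.
Qed.

Lemma lapply_t_concat L1 L2 :
  lang_eq (lapply_t t (lconcat L1 L2)) (lconcat (lapply_t t L1) (lapply_t t L2)).
Proof.
move=> z; rewrite lapply_tE; split=> [[w' [x' [Lw' [Lx' /gcomp_map_inv]]]] | ].
- case=> w [x [Ew Ex Hz]]; exists w, x.
  by rewrite !lapply_tE Ew Ex.
- case=> w [x [/lapply_tE Lw [/lapply_tE Lx /(gcomp_map tpull) Hz]]].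
  by exists (gs_map tpull w), (gs_map tpull x).
Qed.

End TestMorphism.

Section ActionMorphism.
Variables (S0 S1 : Type) (T : finType) (s : S0 -> glang S1 T).
Implicit Types (a b : atom T) (r : seq (S0 * atom T)) (L : glang S0 T).

Lemma expand_ends a r z :
  expand s a r z -> gs_first z = a /\ gs_last z = last a (map snd r).
Proof.
elim: r a z => [|[p b] r IH] a z /=; first by move=> ->.
case=> w [y1 [y2 [z' [_ [ez' [/gcomp1l [Fw ->] [/gcomp1r [_ ->] Hz]]]]]]].
by rewrite (gcomp_first Hz) (gcomp_last Hz) Fw (IH _ _ ez').2.
Qed.

Lemma expand_cons a p b r z :
  expand s a ((p, b) :: r) z <->
  exists w z', [/\ s p w, expand s b r z', gs_first w = a & gcomp w z' = Some z].
Proof.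
split=> [[w [y1 [y2 [z' [sw [ez' [/gcomp1l [Fw ->] [/gcomp1r [_ ->] Hz]]]]]]]] |].
  by exists w, z'.
case=> w [z' [sw ez' Fw Hz]]; exists w, w, w, z'.
have Lw : gs_last w = b by case/gcompP: Hz => ->; rewrite (expand_ends ez').1.
by do 2 split=> //; split; [apply/gcomp1l | split; first apply/gcomp1r].
Qed.

Lemma expand_cat a r1 r2 z :
  expand s a (r1 ++ r2) z <->
  exists z1 z2, [/\ expand s a r1 z1, expand s (last a (map snd r1)) r2 z2
                  & gcomp z1 z2 = Some z].
Proof.
elim: r1 a z => [|[p b] r1 IH] a z.
  rewrite /=; split=> [ez | [_ [z2 [-> ez2 /gcomp1l [_ ->]]]] //].
  by exists (GS a [::]), z; split=> //; apply/gcomp1l; rewrite (expand_ends ez).1.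
rewrite cat_cons expand_cons; split.
- case=> w [z' [sw /IH [z1 [z2 [ez1 ez2 Hz']]] Fw Hz]].
  have [y [Hy Hyz]] := (gcompA w z1 z2 z).2 (ex_intro _ z' (conj Hz' Hz)).
  by exists y, z2; split=> //; apply/expand_cons; exists w, z1.
- case=> y [z2 [/expand_cons [w [z1 [sw ez1 Fw Hy]]] ez2 Hyz]].
  have [z' [Hz' Hz]] := (gcompA w z1 z2 z).1 (ex_intro _ y (conj Hy Hyz)).
  by exists w, z'; split=> //; apply/IH; exists z1, z2.
Qed.

Lemma lapply_s_ext L L' : lang_eq L L' -> lang_eq (lapply_s s L) (lapply_s s L').
Proof. by move=> E z; split=> -[u [Lu Hu]]; exists u; rewrite (E u) in Lu *. Qed.

Lemma lapply_s_lone : lang_eq (lapply_s s (@lone S0 T)) (@lone S1 T).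
Proof.
move=> z; rewrite /lone; split=> [[[a r] [/= -> ->]] // | Ez].
by exists (GS (gs_first z) [::]); rewrite /= -Ez gstring_eta.
Qed.

Lemma lapply_s_ltest (P : pred (atom T)) :
  lang_eq (lapply_s s (@ltest S0 T P)) (@ltest S1 T P).
Proof.
move=> z; rewrite /ltest; split=> [[[a r] [[/= -> Pa] ->]] // | [Ez Pz]].
by exists (GS (gs_first z) [::]); rewrite /= -Ez gstring_eta.
Qed.

Lemma lapply_s_act p : lang_eq (lapply_s s (Lsem (@KAct S0 T p))) (s p).
Proof.
move=> z; split=> [[_ [[a [b ->]] /expand_cons [w [_ [sw -> _ /gcomp1r [_ ->]]]]]] //|].
move=> sz.
exists (GS (gs_first z) [:: (p, gs_last z)]); split; first by do 2 eexists.
by apply/expand_cons; exists z, (GS (gs_last z) [::]); split=> //; apply/gcomp1r.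
Qed.

Lemma lapply_s_concat L1 L2 :
  lang_eq (lapply_s s (lconcat L1 L2)) (lconcat (lapply_s s L1) (lapply_s s L2)).
Proof.
move=> z; split.
- case=> u [[u1 [u2 [L1u1 [L2u2 /gcompP [E ->]]]]] /expand_cat [z1 [z2 [ez1 ez2 Hz]]]].
  exists z1, z2; split; first by exists u1.
  by split=> //; exists u2; rewrite -E.
- case=> z1 [z2 [[u1 [L1u1 ez1]] [[u2 [L2u2 ez2]] Hz]]].
  have E : gs_last u1 = gs_first u2.
    rewrite /gs_last -(expand_ends ez1).2 -(expand_ends ez2).1.
    by case/gcompP: Hz.
  exists (GS (gs_first u1) (gs_rest u1 ++ gs_rest u2)); split.
    by exists u1, u2; split=> //; split=> //; apply/gcompP.
  by apply/expand_cat; exists z1, z2; rewrite -E in ez2.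
Qed.

End ActionMorphism.

Section Morphism.
Variables (S0 S1 : Type) (T0 T1 : finType).
Variables (s : S0 -> glang S1 T1) (t : T0 -> bexp T1).
Implicit Types (L : glang S0 T0).

Lemma lapply_st_ltest (P : pred (atom T0)) :
  lang_eq (lapply_st s t (@ltest S0 T0 P)) (@ltest S1 T1 (P \o tpull t)).
Proof.
by move=> z; rewrite /lapply_st (lapply_s_ext s (lapply_t_ltest t P) z) lapply_s_ltest.
Qed.

Lemma lapply_st_lone : lang_eq (lapply_st s t (@lone S0 T0)) (@lone S1 T1).
Proof.
move=> z; rewrite /lapply_st (lapply_s_ext s (@lapply_t_lone S0 _ _ t) z).
exact: lapply_s_lone.
Qed.

Lemma lapply_st_act p : lang_eq (lapply_st s t (Lsem (@KAct S0 T0 p))) (s p).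
Proof.
by move=> z; rewrite /lapply_st (lapply_s_ext s (lapply_t_act t p) z) lapply_s_act.
Qed.

Lemma lapply_st_union L1 L2 :
  lang_eq (lapply_st s t (fun z => L1 z \/ L2 z))
          (fun z => lapply_st s t L1 z \/ lapply_st s t L2 z).
Proof.
move=> z; split=> [[u [/lapply_tE [Lu | Lu] eu]] | [] [u [/lapply_tE Lu eu]]];
  [left | right | | ]; exists u; split=> //; apply/lapply_tE; by [| left | right].
Qed.

Lemma lapply_st_concat L1 L2 :
  lang_eq (lapply_st s t (lconcat L1 L2))
          (lconcat (lapply_st s t L1) (lapply_st s t L2)).
Proof.
move=> z; rewrite /lapply_st (lapply_s_ext s (lapply_t_concat t L1 L2) z).
exact: lapply_s_concat.
Qed.

Lemma lapply_st_lpow L n : lang_eq (lapply_st s t (lpow L n)) (lpow (lapply_st s t L) n).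
Proof.
elim: n => [|n IH] z /=; first exact: lapply_st_lone.
by rewrite lapply_st_concat; apply: lconcat_ext.
Qed.

Lemma lapply_st_lstar L : lang_eq (lapply_st s t (lstar L)) (lstar (lapply_st s t L)).
Proof.
move=> z; split=> [[u [/lapply_tE [n Ln] eu]] | [n]].
- by exists n; apply/lapply_st_lpow; exists u; split=> //; apply/lapply_tE.
- case/lapply_st_lpow=> u [/lapply_tE Ln eu].
  by exists u; split=> //; apply/lapply_tE; exists n.
Qed.

End Morphism.

Theorem proposition5p3 (S0 S1 : Type) (T0 T1 : finType)
    (s : S0 -> kexp S1 T1) (t : T0 -> bexp T1) (e : kexp S0 T0) :
  lang_eq (Lsem (kapply s t e))
          (lapply_st (fun p => Lsem (s p)) t (Lsem e)).
Proof.
elim: e => [b | p | e IHe f IHf | e IHe f IHf | e IHe] z.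
- by rewrite (lapply_st_ltest _ _ (fun a => beval a b) z) /ltest /= beval_bapply.
- by rewrite lapply_st_act.
- by rewrite lapply_st_union /= IHe IHf.
- by rewrite lapply_st_concat; apply: lconcat_ext.
- by rewrite lapply_st_lstar; apply: lstar_ext.
Qed.
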